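(* Let $X$ be an abelian metric group and let $f:X\to\mathbb{R}$ be a subadditive function. The following conditions are equivalent: (a) $f$ is locally bounded at some point; (b) $f$ is a WNT-function; (c) $f$ is bounded above on some shift-compact set; (d) $f$ is bounded on some shift-compact set.
   Context: An abelian metric group is an abelian topological group whose topology is given by an invariant metric. $f$ is subadditive if $f(x+y)\le f(x)+f(y)$ for all $x,y\in X$. A set $A\subset X$ is shift-compact if for every sequence $(x_n)$ tending to $0$ in $X$ there exists $x\in X$ such that $\{n\in\mathbb{N}: x+x_n\in A\}$ is infinite. Locally bounded at a point means $|f|$ is bounded on some neighbourhood of that point. For $k\in\mathbb{N}$ let $H^k:=f^{-1}((-k,k))$. $f$ is a WNT-function if for every convergent sequence $(u_n)_{n\in\mathbb{N}}$ in $X$ there exist $k\in\mathbb{N}$, an infinite set $\mathbb{M}\subset\mathbb{N}$ and $t\in X$ such that $\{t+u_m: m\in\mathbb{M}\}\subset H^k$. *)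

From HB Require Import structures.
From mathcomp Require Import all_boot all_order all_algebra.
From mathcomp Require Import boolp classical_sets cardinality reals.
Set Implicit Arguments. Unset Strict Implicit. Unset Printing Implicit Defensive.
Import Order.TTheory GRing.Theory Num.Theory.
Local Open Scope ring_scope.
Local Open Scope classical_set_scope.

Definition is_metric (R : realType) (X : Type) (d : X -> X -> R) : Prop :=
  [/\ (forall x y, d x y = 0 <-> x = y),
      (forall x y, d x y = d y x)
    & (forall x y z, d x z <= d x y + d y z)].

Definition invariant_metric (R : realType) (X : zmodType) (d : X -> X -> R) : Prop :=
  forall x y z, d (x + z) (y + z) = d x y.

Definition abelian_metric_group (R : realType) (X : zmodType) (d : X -> X -> R) : Prop :=
  is_metric d /\ invariant_metric d.

Definition seq_cvg_to (R : realType) (X : Type) (d : X -> X -> R)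
  (u : nat -> X) (l : X) : Prop :=
  forall e : R, 0 < e -> exists N : nat, forall n, (N <= n)%N -> d (u n) l < e.

Definition subadditive (R : realType) (X : zmodType) (f : X -> R) : Prop :=
  forall x y, f (x + y) <= f x + f y.

Definition shift_compact (R : realType) (X : zmodType) (d : X -> X -> R)
  (A : set X) : Prop :=
  forall u : nat -> X, seq_cvg_to d u 0 ->
    exists x : X, ~ finite_set [set n : nat | A (x + u n)].

Definition locally_bounded_at (R : realType) (X : Type) (d : X -> X -> R)
  (f : X -> R) (x0 : X) : Prop :=
  exists r : R, 0 < r /\ exists M : R, forall y, d y x0 < r -> `|f y| <= M.

Definition Hk (R : realType) (X : Type) (f : X -> R) (k : nat) : set X :=
  [set x | - (k%:R) < f x < k%:R].

Definition WNT_function (R : realType) (X : zmodType) (d : X -> X -> R)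
  (f : X -> R) : Prop :=
  forall u : nat -> X, (exists l, seq_cvg_to d u l) ->
    exists (k : nat) (MM : set nat) (t : X),
      ~ finite_set MM /\ (forall m, MM m -> Hk f k (t + u m)).

Definition bounded_above_on (R : realType) (X : Type) (f : X -> R) (A : set X) : Prop :=
  exists M : R, forall x, A x -> f x <= M.

Definition bounded_on (R : realType) (X : Type) (f : X -> R) (A : set X) : Prop :=
  exists M : R, forall x, A x -> `|f x| <= M.

From HB Require Import structures.
From mathcomp Require Import all_boot all_order all_algebra.
From mathcomp Require Import boolp classical_sets cardinality reals.
From mathcomp Require Import lra.
Import Order.TTheory GRing.Theory Num.Theory.
Local Open Scope ring_scope.
Local Open Scope classical_set_scope.
Set Implicit Arguments.

(* Every condition yields local boundedness through one criterion: if along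
   every null sequence (u n) the values f (u n) stay below some constant
   infinitely often, then f is bounded above near 0 (otherwise pick u n with
   d (u n) 0 < 1/(n+1) and f (u n) > n).  For subadditive f, a bound above on a
   ball around 0 is also a bound below there, since f y >= f 0 - f (- y).  A
   bound above on a shift t + u n (from WNT or shift-compactness) transfers to
   u n itself at the cost of f (- t). *)

Lemma infinite_nat_ge (N : nat) : infinite_set [set n : nat | (N <= n)%N].
Proof.
apply: (@sub_infinite_set _ (setT `\` `I_N)).
  by move=> n [_ /negP]; rewrite /= -leqNgt.
exact: infinite_setD infinite_nat (finite_II N).
Qed.

Lemma infinite_set_nat_ge (S : set nat) (N : nat) :
  infinite_set S -> exists2 n, S n & (N <= n)%N.
Proof.
move=> /infinite_setD /(_ (finite_II N)) /infinite_setN0 [n [Sn /= nN]].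
by exists n => //; rewrite leqNgt; apply/negP.
Qed.

Lemma invSn_lt_eventually {R : realType} (e : R) :
  0 < e -> exists N : nat, forall n, (N <= n)%N -> (n.+1%:R)^-1 < e.
Proof.
move=> e0; exists (Num.truncn e^-1).+1 => n Nn.
rewrite -[e]invrK ltf_pV2 ?posrE ?invr_gt0 ?ltr0Sn //.
apply: (lt_le_trans (truncnS_gt _)); rewrite ler_nat.
exact: leq_trans Nn (leqnSn n).
Qed.

Definition bounded_above_near {R : realType} {X : Type} (d : X -> X -> R)
  (f : X -> R) (x0 : X) : Prop :=
  exists r : R, 0 < r /\ exists K : R, forall y, d y x0 < r -> f y <= K.

Definition often_bounded_above_on_null_seqs {R : realType} {X : zmodType}
  (d : X -> X -> R) (f : X -> R) : Prop :=
  forall u : nat -> X, seq_cvg_to d u 0 ->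
    exists C : R, infinite_set [set n | f (u n) <= C].

Section BoundedAboveCriterion.
Variables (R : realType) (X : zmodType) (d : X -> X -> R) (f : X -> R).

Lemma unbounded_above_near0_seq :
  ~ bounded_above_near d f 0 ->
  exists u : nat -> X, seq_cvg_to d u 0 /\ forall n, n%:R < f (u n).
Proof.
move=> unbdd.
have pick n : exists y, d y 0 < (n.+1%:R)^-1 /\ n%:R < f y.
  apply: contrapT => none; apply: unbdd; exists (n.+1%:R)^-1.
  split; first by rewrite invr_gt0 ltr0Sn.
  by exists n%:R => y dy; rewrite leNgt; apply/negP => fy; apply: none; exists y.
have [u hu] := choice pick; exists u; split=> [e e0|n]; last by case: (hu n).
have [N hN] := invSn_lt_eventually _ e0.
by exists N => n Nn; apply: lt_trans (hN n Nn); case: (hu n).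
Qed.

Lemma bounded_above_near0_of_null_seqs :
  often_bounded_above_on_null_seqs d f -> bounded_above_near d f 0.
Proof.
move=> often; apply: contrapT => /unbounded_above_near0_seq [u [null fu]].
have [C hC] := often u null.
have [n /= fC Cn] := infinite_set_nat_ge (Num.truncn C).+1 hC.
have : C < n%:R by apply: lt_le_trans (truncnS_gt C) _; rewrite ler_nat.
by have := fu n; lra.
Qed.

End BoundedAboveCriterion.

Section Subadditive.
Variables (R : realType) (X : zmodType) (f : X -> R).
Hypothesis hf : subadditive f.

Lemma subadditive_f0_ge0 : 0 <= f 0.
Proof. by have := hf 0 0; rewrite addr0 -{1}[f 0]addr0 lerD2l. Qed.

Lemma subadditive_f0_subN_le (y : X) : f 0 - f (- y) <= f y.
Proof. by rewrite lerBlDr -(subrr y); exact: hf. Qed.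

Lemma subadditive_shift_le (t y : X) (C : R) :
  f (t + y) <= C -> f y <= C + f (- t).
Proof.
move=> fty; have := hf (t + y) (- t); rewrite addrC addKr => h.
by apply: le_trans h _; rewrite lerD2r.
Qed.

Lemma subadditive_shift_often (u : nat -> X) (t : X) (C : R) :
  infinite_set [set n | f (t + u n) <= C] ->
  infinite_set [set n | f (u n) <= C + f (- t)].
Proof. by apply: sub_infinite_set => n; exact: subadditive_shift_le. Qed.

Lemma WNT_often_bounded_above_on_null_seqs (d : X -> X -> R) :
  WNT_function d f -> often_bounded_above_on_null_seqs d f.
Proof.
move=> wnt u null; have [k [MM [t [MMinf hMM]]]] := wnt u (ex_intro _ 0 null).
exists (k%:R + f (- t)); apply: subadditive_shift_often.
apply: sub_infinite_set MMinf => m /hMM /andP [_]; exact: ltW.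
Qed.

Lemma shift_compact_often_bounded_above_on_null_seqs
    (d : X -> X -> R) (A : set X) :
  shift_compact d A -> bounded_above_on f A ->
  often_bounded_above_on_null_seqs d f.
Proof.
move=> hA [M hM] u null; have [x hx] := hA u null.
exists (M + f (- x)); apply: subadditive_shift_often.
by apply: sub_infinite_set hx => n /hM.
Qed.

End Subadditive.

Section AbelianMetricGroup.
Variables (R : realType) (X : zmodType) (d : X -> X -> R).
Hypothesis hX : abelian_metric_group d.

Lemma distC (x y : X) : d x y = d y x.
Proof. by case: hX => -[]. Qed.

Lemma distDr (x y z : X) : d (x + z) (y + z) = d x y.
Proof. by case: hX => _; exact. Qed.

Lemma distN0 (y : X) : d (- y) 0 = d y 0.
Proof. by rewrite -(distDr (- y) 0 y) addNr add0r distC. Qed.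

Lemma dist_shift (x0 l y : X) : d (x0 - l + y) x0 = d y l.
Proof. by rewrite -(distDr y l (x0 - l)) [y + _]addrC [l + _]addrC subrK. Qed.

Lemma ball_shift_compact (x0 : X) (r : R) :
  0 < r -> shift_compact d [set y | d y x0 < r].
Proof.
move=> r0 u null; exists x0; have [N hN] := null r r0.
apply: sub_infinite_set (infinite_nat_ge N) => n /hN /=.
by rewrite -(dist_shift x0 0) subr0.
Qed.

Lemma locally_bounded_WNT (f : X -> R) (x0 : X) :
  locally_bounded_at d f x0 -> WNT_function d f.
Proof.
move=> [r [r0 [M hM]]] u [l ul]; have [N hN] := ul r r0.
exists (Num.truncn `|M|).+1, [set n | (N <= n)%N], (x0 - l).
split=> [|m /hN dml]; first exact: infinite_nat_ge.
rewrite /Hk /= -ltr_norml; apply: le_lt_trans (hM _ _) _.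
  by rewrite dist_shift.
exact: le_lt_trans (ler_norm M) (truncnS_gt _).
Qed.

Variable f : X -> R.
Hypothesis hf : subadditive f.

Lemma locally_bounded_at0 :
  bounded_above_near d f 0 -> locally_bounded_at d f 0.
Proof.
move=> [r [r0 [K hK]]]; exists r; split=> //; exists K => y dy.
rewrite ler_norml hK // andbT.
have := subadditive_f0_subN_le hf y; have := subadditive_f0_ge0 hf.
by have := hK (- y); rewrite distN0 => /(_ dy); lra.
Qed.

End AbelianMetricGroup.

Lemma bounded_on_bounded_above_on (R : realType) (X : Type) (f : X -> R)
    (A : set X) :
  bounded_on f A -> bounded_above_on f A.
Proof. by move=> [M hM]; exists M => x /hM; exact: le_trans (ler_norm _). Qed.

Theorem corollary3p8 (R : realType) (X : zmodType) (d : X -> X -> R)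
  (f : X -> R) (hX : abelian_metric_group d) (hf : subadditive f) :
  let a := exists x0 : X, locally_bounded_at d f x0 in
  let b := WNT_function d f in
  let c := exists A : set X, shift_compact d A /\ bounded_above_on f A in
  let e := exists A : set X, shift_compact d A /\ bounded_on f A in
  (a <-> b) /\ (b <-> c) /\ (c <-> e).
Proof.
move=> a b c e.
have criterion : often_bounded_above_on_null_seqs d f -> a.
  move=> often; exists 0; apply: (locally_bounded_at0 hX hf).
  exact: bounded_above_near0_of_null_seqs.
have ab : a -> b by move=> [x0]; exact: locally_bounded_WNT.
have ba : b -> a.
  by move=> wnt; apply/criterion; exact: WNT_often_bounded_above_on_null_seqs.
have ae : a -> e.
  move=> [x0 [r [r0 [M hM]]]]; exists [set y | d y x0 < r].
  by split; [exact: ball_shift_compact | exists M].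
have ec : e -> c.
  by move=> [A [hA bA]]; exists A; split; last exact: bounded_on_bounded_above_on.
have ca : c -> a.
  move=> [A [hA bA]]; apply/criterion.
  exact: (shift_compact_often_bounded_above_on_null_seqs hf hA bA).
by do !split; auto.
Qed.
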